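(* Let $t\ge2$ and $v\ge2$ be integers. Then an optimum $(d,t)$-CDA$((d+1)v^t;2t,v)$ exists for every positive integer $d$ with $d+1\le v$.
   Context: Consecutive $t$-way interaction in an $N\times k$ array $A=(a_{ij})$ over a $v$-set $V$: $T=\{(i,x_i),\dots,(i+t-1,x_{i+t-1})\}$, $1\le i\le k-t+1$, $x_r\in V$; $\rho(A,T)=\{r: a_{r,j}=x_j\ \forall (j,x_j)\in T\}$, $\rho(A,\mathcal T)=\bigcup_{T\in\mathcal T}\rho(A,T)$. A $(d,t)$-CDA$(N;k,v)$ is an $N\times k$ array over $V$ in which every $t$ consecutive columns contain every $t$-tuple at least once, and such that for every set $\mathcal T$ of exactly $d$ distinct consecutive $t$-way interactions and every consecutive $t$-way interaction $T$: $\rho(A,T)\subseteq\rho(A,\mathcal T)$ iff $T\in\mathcal T$. It is optimum if $N=(d+1)v^t$. *)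

From mathcomp Require Import all_boot all_order all_algebra.
Set Implicit Arguments. Unset Strict Implicit. Unset Printing Implicit Defensive.

(* Arrays: an N x k array over the v-set V = 'I_v is a matrix 'M['I_v]_(N,k).
   Rows and columns are 0-indexed. *)

(* A consecutive t-way interaction in k columns over 'I_v: a starting column
   i (0 <= i <= k - t, i.e. i : 'I_(k - t + 1)) and values x_0..x_{t-1};
   it stands for {(i, x_0), ..., (i+t-1, x_{t-1})}. *)
Definition cinter (k t v : nat) : finType :=
  ('I_(k - t + 1) * {ffun 'I_t -> 'I_v})%type.

Definition rho (N k t v : nat) (A : 'M['I_v]_(N, k)) (T : cinter k t v)
  : {set 'I_N} :=
  [set r : 'I_N | [forall j : 'I_t, forall c : 'I_k,
      (val c == val T.1 + val j) ==> (A r c == T.2 j)]].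

Definition rhoS (N k t v : nat) (A : 'M['I_v]_(N, k)) (cT : {set cinter k t v})
  : {set 'I_N} :=
  \bigcup_(T in cT) rho A T.

Definition is_CDA (d t N k v : nat) (A : 'M['I_v]_(N, k)) : Prop :=
  (forall T : cinter k t v, rho A T != set0) /\
  (forall (cT : {set cinter k t v}) (T : cinter k t v),
      #|cT| = d -> (rho A T \subset rhoS A cT <-> T \in cT)).

From mathcomp Require Import all_boot all_order all_algebra.
From mathcomp Require Import zify.
Set Implicit Arguments. Unset Strict Implicit. Unset Printing Implicit Defensive.

(* An array is a (d,t)-CDA as soon as every consecutive t-way
   interaction is covered by at least d+1 rows and two distinct interactions
   share at most one row: if T is not in a family cT of d interactions, the
   d+1 rows of T meet the rows of each member of cT at most once, so they
   cannot all be covered by cT.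

   Rows are labelled by pairs (s, x) of a shift s < d+1 and a
   word x : 'I_t -> 'I_v; the row is x followed by x + s (entrywise mod v).
   - Coverage: for each shift s, some word x places any prescribed t-tuple
     on any window of t consecutive columns, so every interaction has d+1
     rows, one per shift.
   - Separation: two rows agreeing on t+1 consecutive columns coincide (the
     first and last column fix the shift since s < v, then the t columns
     fix the word); two distinct windows overlap on t+1 columns, and two
     distinct interactions on the same window share no row. *)

Lemma card_bigcup_le (I T : finType) (P : pred I) (F : I -> {set T}) :
  #|\bigcup_(i | P i) F i| <= \sum_(i | P i) #|F i|.
Proof.
elim/big_rec2: _ => [|i U n _ IH]; first by rewrite cards0.
by apply: leq_trans (leq_card_setU _ _) _; rewrite leq_add2l.
Qed.

Lemma cda_criterion (d t N k v : nat) (A : 'M['I_v]_(N, k)) :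
  (forall T : cinter k t v, d < #|rho A T|) ->
  (forall T T' : cinter k t v, T != T' -> #|rho A T :&: rho A T'| <= 1) ->
  is_CDA d t A.
Proof.
move=> many_rows few_common; split=> [T | cT T card_cT].
  by rewrite -card_gt0; apply: leq_ltn_trans (many_rows T).
split=> [sub_cT | T_cT]; last exact: bigcup_sup.
apply: contraTT (many_rows T) => T_notin_cT; rewrite -leqNgt -card_cT.
have cover : rho A T \subset \bigcup_(T' in cT) (rho A T :&: rho A T').
  apply/subsetP => r rT; have /bigcupP [T' T'_cT rT'] := subsetP sub_cT r rT.
  by apply/bigcupP; exists T'; rewrite // inE rT rT'.
apply: leq_trans (subset_leq_card cover) _.
apply: leq_trans (card_bigcup_le _ _) _; rewrite -sum1_card; apply: leq_sum => T' T'_cT.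
by apply: few_common; apply: contraNneq T_notin_cT => ->.
Qed.

Section Construction.

Variables (d t v : nat).
Hypotheses (t_gt0 : 0 < t) (v_gt0 : 0 < v).

Definition label : finType := ('I_(d + 1) * {ffun 'I_t -> 'I_v})%type.

Definition colI (c : nat) : 'I_t := Ordinal (ltn_pmod c t_gt0).
Definition modv (n : nat) : 'I_v := Ordinal (ltn_pmod n v_gt0).

Definition entry (r : label) (c : nat) : 'I_v :=
  modv (r.2 (colI c) + (t <= c) * r.1).

Lemma colI_id (c : 'I_t) : colI c = c.
Proof. by apply: val_inj; rewrite /= modn_small. Qed.

Lemma colI_addt (c : nat) : colI (c + t) = colI c.
Proof. by apply: val_inj; rewrite /= modnDr. Qed.

Lemma entry_low (r : label) (c : nat) : c < t -> val (entry r c) = r.2 (colI c).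
Proof. by move=> c_lt; rewrite /= leqNgt c_lt addn0 modn_small. Qed.

Lemma word_determined (r1 r2 : label) (c : nat) :
  r1.1 = r2.1 -> entry r1 c = entry r2 c -> r1.2 (colI c) = r2.2 (colI c).
Proof.
move=> eq_s /(congr1 val) /= /eqP; rewrite eq_s eqn_modDr => /eqP eq_x.
by apply: val_inj; move: eq_x; rewrite !modn_small.
Qed.

Hypothesis d_lt_v : d + 1 <= v.

(* Columns a and a + t carry the same word letter; their difference in a row
   is its shift, which is determined since shifts are smaller than v. *)
Lemma shift_determined (r1 r2 : label) (a : nat) :
  a < t -> r1.2 (colI a) = r2.2 (colI a) -> entry r1 (a + t) = entry r2 (a + t) ->
  r1.1 = r2.1.
Proof.
move=> a_lt eq_x /(congr1 val) /= /eqP.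
rewrite colI_addt eq_x leq_addl !mul1n eqn_modDl => /eqP.
by rewrite !modn_small ?(leq_trans (ltn_ord _) d_lt_v) // => /val_inj.
Qed.

Definition agree (r1 r2 : label) (i : nat) : Prop :=
  forall j, j < t -> entry r1 (i + j) = entry r2 (i + j).

(* Every residue mod t occurs in a window of t consecutive columns. *)
Lemma window_residue (a : nat) (c : 'I_t) :
  a <= t -> colI (a + (c + t - a) %% t) = c.
Proof.
move=> a_le; apply: val_inj; rewrite /= modnDmr.
have -> : a + (c + t - a) = c + t by lia.
by rewrite modnDr modn_small.
Qed.

Lemma label_eq_of_agree (r1 r2 : label) (a : nat) :
  a < t -> agree r1 r2 a -> entry r1 (a + t) = entry r2 (a + t) -> r1 = r2.
Proof.
move=> a_lt agr last_eq.
have first_eq : r1.2 (colI a) = r2.2 (colI a).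
  by apply: val_inj; rewrite /= -!entry_low // -(addn0 a) (agr 0).
have eq_s := shift_determined a_lt first_eq last_eq.
case: r1 r2 eq_s agr {first_eq last_eq} => [s x1] [s' x2] /= <- agr.
congr pair; apply/ffunP => c.
rewrite -(window_residue c (ltnW a_lt)).
by apply: (word_determined (r1 := (s, x1)) (r2 := (s, x2))) => //; apply/agr/ltn_pmod.
Qed.

(* Two distinct windows within 2t columns overlap on t+1 columns. *)
Lemma label_eq_of_two_windows (r1 r2 : label) (i i' : nat) :
  i < i' -> i' <= t -> agree r1 r2 i -> agree r1 r2 i' -> r1 = r2.
Proof.
move=> lt_ii' le_i't agr agr'; apply: (label_eq_of_agree _ agr); first lia.
have := agr' (i + t - i'); rewrite subnKC; last lia.
by apply; lia.
Qed.

(* The word with shift s placing the tuple y on the window starting at i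
   (i <= t): the window reads letters i.. of x unshifted and letters ..i-1 in
   the shifted half, so those are stored pre-shifted by -s. *)
Definition cover_word (i : nat) (y : {ffun 'I_t -> 'I_v}) (s : 'I_(d + 1))
  : {ffun 'I_t -> 'I_v} :=
  [ffun c : 'I_t => modv (y (colI (c + t - i)) + (c < i) * (v - s))].

Lemma cover_word_entry (i : nat) (y : {ffun 'I_t -> 'I_v}) (s : 'I_(d + 1)) :
  i <= t -> forall j : 'I_t, entry (s, cover_word i y s) (i + j) = y j.
Proof.
move=> i_le j; apply: val_inj; have j_lt := ltn_ord j; have s_lt := ltn_ord s.
case: (ltnP (i + j) t) => [low | high].
  rewrite entry_low //= ffunE /= (modn_small low) ltnNge leq_addr /= addn0.
  have -> : i + j + t - i = j + t by lia.
  by rewrite colI_addt colI_id modn_small.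
have col : (i + j) %% t = i + j - t.
  by rewrite -{1}(subnK high) modnDr modn_small //; lia.
rewrite /= high mul1n ffunE /= col.
have -> : i + j - t < i by lia.
have -> : i + j - t + t - i = j by lia.
rewrite colI_id mul1n modnDml -addnA subnK; last lia.
by rewrite modnDr modn_small.
Qed.

Lemma card_label : #|label| = (d + 1) * v ^ t.
Proof. by rewrite card_prod card_ffun !card_ord. Qed.

Definition decode (r : 'I_((d + 1) * v ^ t)) : label :=
  enum_val (cast_ord (esym card_label) r).
Definition encode (p : label) : 'I_((d + 1) * v ^ t) :=
  cast_ord card_label (enum_rank p).

Lemma encodeK : cancel encode decode.
Proof. by move=> p; rewrite /decode /encode cast_ordK enum_rankK. Qed.
Lemma decodeK : cancel decode encode.
Proof. by move=> r; rewrite /decode /encode enum_valK cast_ordKV. Qed.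

Definition cda_array : 'M['I_v]_((d + 1) * v ^ t, 2 * t) :=
  \matrix_(r, c) entry (decode r) c.

Lemma window_le (T : cinter (2 * t) t v) : T.1 <= t.
Proof. by have := ltn_ord T.1; lia. Qed.

Lemma in_rho (T : cinter (2 * t) t v) (r : 'I_((d + 1) * v ^ t)) :
  (r \in rho cda_array T) = [forall j : 'I_t, entry (decode r) (T.1 + j) == T.2 j].
Proof.
rewrite inE; apply/forallP/forallP => covered j.
  have col_lt : T.1 + j < 2 * t by have := window_le T; have := ltn_ord j; lia.
  by have /forallP/(_ (Ordinal col_lt)) := covered j; rewrite /= eqxx mxE.
by apply/forallP => c; apply/implyP => /eqP col; rewrite mxE col; apply: covered.
Qed.

(* Each interaction is covered by d+1 rows, one for each shift. *)
Lemma cda_array_cover (T : cinter (2 * t) t v) : d < #|rho cda_array T|.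
Proof.
pose cover_row (s : 'I_(d + 1)) := encode (s, cover_word T.1 T.2 s).
have inj_cover : injective cover_row.
  by move=> s1 s2 /(can_inj encodeK) /(congr1 fst).
have card_rows : #|[set cover_row s | s : 'I_(d + 1)]| = d.+1.
  by rewrite card_imset // card_ord addn1.
rewrite -card_rows; apply/subset_leq_card/subsetP => _ /imsetP [s _ ->].
rewrite in_rho; apply/forallP => j; rewrite encodeK.
by rewrite cover_word_entry // window_le.
Qed.

Lemma cda_array_separate (T T' : cinter (2 * t) t v) :
  T != T' -> #|rho cda_array T :&: rho cda_array T'| <= 1.
Proof.
move=> neq_TT'; apply/card_le1_eqP => r2 r1 /setIP [r2T r2T'] /setIP [r1T r1T'].
have agree_on (U : cinter (2 * t) t v) :
    r1 \in rho cda_array U -> r2 \in rho cda_array U ->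
    agree (decode r1) (decode r2) U.1.
  rewrite !in_rho => /forallP cov1 /forallP cov2 j j_lt.
  by rewrite (eqP (cov1 (Ordinal j_lt))) (eqP (cov2 (Ordinal j_lt))).
apply: (can_inj decodeK).
case: (ltngtP T.1 T'.1) => [lt_TT' | lt_T'T | eq_TT'].
- exact: label_eq_of_two_windows lt_TT' (window_le T') (agree_on T r1T r2T) (agree_on T' r1T' r2T').
- exact: label_eq_of_two_windows lt_T'T (window_le T) (agree_on T' r1T' r2T') (agree_on T r1T r2T).
- (* on a common window, a common row fixes the values of both interactions *)
  case/negP: neq_TT'; clear r2T r2T' agree_on.
  move: T T' eq_TT' r1T r1T' => [i x] [i' x'] /= /val_inj <-.
  rewrite !in_rho => /forallP cov /forallP cov'; apply/eqP; congr pair.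
  by apply/ffunP => j; rewrite -(eqP (cov j)) (eqP (cov' j)).
Qed.

End Construction.

Theorem mainTheorem8 (t v d : nat) :
  2 <= t -> 2 <= v -> 0 < d -> d + 1 <= v ->
  exists A : 'M['I_v]_((d + 1) * v ^ t, 2 * t), is_CDA d t A.
Proof.
move=> t_ge2 v_ge2 _ d_lt_v.
have t_gt0 : 0 < t by lia.
have v_gt0 : 0 < v by lia.
exists (cda_array d t_gt0 v_gt0); apply: cda_criterion.
- exact: cda_array_cover.
- exact: cda_array_separate.
Qed.
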